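(* Let $k$ be a non-archimedean local field of characteristic different from $2$, let $G=\mathrm{GSp}(4,k)$, and let $P$, $Q$, $H$, $\mathbf{s}_2$ be as in the context. Then $G=QH$, and there is a disjoint double coset decomposition $G=PH\sqcup P\mathbf{s}_2H$.
   Context: $G=\mathrm{GSp}(4,k)=\{g\in \mathrm{GL}(4,k)\mid g^tJg=\lambda_G(g)J\}$ with $J=\begin{pmatrix}0&E_2\\-E_2&0\end{pmatrix}$ and similitude factor $\lambda_G(g)\in k^\times$. Let $e_1,e_2,e_1^*,e_2^*$ be the standard basis of $k^4$ and $L_0=ke_1\oplus ke_2$. $P$ is the Siegel parabolic subgroup (the stabilizer of $L_0$ in $G$) and $Q$ is the Klingen parabolic subgroup (the stabilizer of the line $ke_1$ in $G$). $\mathbf{s}_2=\begin{pmatrix}1&0&0&0\\0&0&0&1\\0&0&1&0\\0&-1&0&0\end{pmatrix}$. Fix a non-square $\alpha\in k^\times$, $K=k(\sqrt{\alpha})$, and write $a=a_1+a_2\sqrt\alpha$ ($a_1,a_2\in k$) for $a\in K$. Let $H=\{g\in\mathrm{GL}(2,K)\mid \det g\in k^\times\}$, identified with a subgroup of $G$ via the embedding $\begin{pmatrix}a&b\\c&d\end{pmatrix}\mapsto \begin{pmatrix} a_1&a_2\alpha&b_1&b_2\\ a_2&a_1&b_2&b_1/\alpha\\ c_1&c_2\alpha&d_1&d_2\\ c_2\alpha&c_1\alpha&d_2\alpha&d_1\end{pmatrix}.$ *)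

From HB Require Import structures.
From mathcomp Require Import all_boot all_order all_algebra.
Set Implicit Arguments. Unset Strict Implicit. Unset Printing Implicit Defensive.
Import Order.TTheory GRing.Theory Num.Theory.
Local Open Scope ring_scope.

(* The valuation [v] is only
   meaningful on nonzero elements (v 0 = +oo is encoded by case splits). *)
Definition is_nonarch_local_field (k : fieldType) : Prop :=
  exists v : k -> int,
    (forall x y : k, x != 0 -> y != 0 -> v (x * y) = v x + v y) /\
    (forall x y : k, x != 0 -> y != 0 -> x + y != 0 ->
        Num.min (v x) (v y) <= v (x + y)) /\
    (exists pi : k, pi != 0 /\ v pi = 1) /\
    (* finite residue field: finitely many representatives of O / m *)
    (exists s : seq k, forall x : k, (x == 0 \/ (x != 0 /\ 0 <= v x)) ->
        exists2 r, r \in s & (x - r == 0 \/ (x - r != 0 /\ 0 < v (x - r)))) /\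
    (forall u : nat -> k,
       (forall n : nat, exists N : nat, forall m p : nat, (N <= m)%N -> (N <= p)%N ->
          u m - u p = 0 \/ (u m - u p != 0 /\ n%:Z <= v (u m - u p))) ->
       exists l : k, forall n : nat, exists N : nat, forall m : nat, (N <= m)%N ->
          u m - l = 0 \/ (u m - l != 0 /\ n%:Z <= v (u m - l))).

Section GSp.
Variable k : fieldType.

Definition Jmx : 'M[k]_4 :=
  \matrix_(i < 4, j < 4)
    (if ((i : nat) == 0%N) && ((j : nat) == 2%N) then 1
     else if ((i : nat) == 1%N) && ((j : nat) == 3%N) then 1
     else if ((i : nat) == 2%N) && ((j : nat) == 0%N) then -1
     else if ((i : nat) == 3%N) && ((j : nat) == 1%N) then -1
     else 0).

Definition inGSp4 (g : 'M[k]_4) : Prop :=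
  g \in unitmx /\ exists lam : k, lam != 0 /\ g^T *m Jmx *m g = lam *: Jmx.

(* standard basis vectors of k^4 (as row vectors), indices 0..3 for
   e1, e2, e1*, e2* *)
Definition evec (i : 'I_4) : 'rV[k]_4 := delta_mx 0 i.

Definition L0mx : 'M[k]_(2, 4) := col_mx (evec 0) (evec 1).

(* g acts on column vectors; the image of the subspace spanned by the rows
   of X is spanned by the rows of X *m g^T. *)
Definition stabilizes m (g : 'M[k]_4) (X : 'M[k]_(m, 4)) : bool :=
  (X *m g^T == X)%MS.

Definition inP (g : 'M[k]_4) : Prop := inGSp4 g /\ stabilizes g L0mx.

Definition inQ (g : 'M[k]_4) : Prop := inGSp4 g /\ stabilizes g (evec 0).

Definition s2 : 'M[k]_4 :=
  \matrix_(i < 4, j < 4)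
    (if ((i : nat) == 0%N) && ((j : nat) == 0%N) then 1
     else if ((i : nat) == 1%N) && ((j : nat) == 3%N) then 1
     else if ((i : nat) == 2%N) && ((j : nat) == 2%N) then 1
     else if ((i : nat) == 3%N) && ((j : nat) == 1%N) then -1
     else 0).

(* An element a = a1 + a2 sqrt(alpha) of K is encoded by the pair (a1, a2). *)
Definition Kmul (alpha : k) (x y : k * k) : k * k :=
  (x.1 * y.1 + alpha * x.2 * y.2, x.1 * y.2 + x.2 * y.1).
Definition Ksub (x y : k * k) : k * k := (x.1 - y.1, x.2 - y.2).

Definition embH (alpha : k) (a b c d : k * k) : 'M[k]_4 :=
  \matrix_(i < 4, j < 4)
   nth 0 (nth [::]
     [:: [:: a.1; a.2 * alpha; b.1; b.2];
         [:: a.2; a.1; b.2; b.1 / alpha];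
         [:: c.1; c.2 * alpha; d.1; d.2];
         [:: c.2 * alpha; c.1 * alpha; d.2 * alpha; d.1] ] i) j.

Definition inH (alpha : k) (h : 'M[k]_4) : Prop :=
  exists a b c d : k * k,
    let det := Ksub (Kmul alpha a d) (Kmul alpha b c) in
    det.2 = 0 /\ det.1 != 0 /\ h = embH alpha a b c d.

End GSp.

(* Let x = g^-1 e1 and y = g^-1 e2 be the first two columns of g^-1, and view
   k^4 as K^2 through the embedding of H.  Since alpha is not a square, the norm
   form a1^2 - alpha a2^2 is anisotropic, so every nonzero vector of K^2 is the
   first column of some element of H: H is transitive on nonzero vectors, and
   g h lies in Q as soon as h e1 = x.  For the Siegel parabolic, let h be the
   K-matrix with columns x and y.  The sqrt(alpha)-part of its determinant is the
   symplectic pairing of x and y, which vanishes, so det h lies in k.  If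
   det h <> 0, then h is in H and g h s2^-1 fixes e1 and e2, so g lies in P s2 H.
   If det h = 0, the columns of h are pairwise orthogonal; any h' in H with
   h' e1 = x shares its second column with h, so g h' fixes e1 and maps e2 into
   L0, and g lies in P H.  Finally P s2 does not meet H: an element of H sending
   e1 and e2* into L0 has a zero third row. *)

From mathcomp Require Import all_boot all_order all_algebra.
From mathcomp Require Import ring.
Import GRing.Theory.
Local Open Scope ring_scope.
Set Implicit Arguments. Unset Strict Implicit.

Lemma sum_ord4 (V : nmodType) (F : 'I_4 -> V) :
  \sum_i F i = F 0 + F 1 + F 2 + F 3.
Proof.
rewrite !big_ord_recr big_ord0 /= GRing.add0r.
by congr (_ + _ + _ + _); congr F; apply: val_inj.
Qed.

Lemma ord4_ind (P : 'I_4 -> Prop) : P 0 -> P 1 -> P 2 -> P 3 -> forall i, P i.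
Proof.
move=> P0 P1 P2 P3 [[|[|[|[|//]]]] i4];
  [move: P0 | move: P1 | move: P2 | move: P3]; congr P; exact: val_inj.
Qed.

Ltac expand_entries := rewrite !mxE ?sum_ord4 ?mxE ?sum_ord4 ?mxE /=.

Ltac mx4_entries :=
  apply/matrixP; let i := fresh "i" in let j := fresh "j" in
  intros i j; expand_entries; revert i j; apply: ord4_ind; apply: ord4_ind => /=.

Section UnitMatrices.
Variable R : comUnitRingType.

Lemma col_mulmx m n p (A : 'M[R]_(m, n)) (B : 'M_(n, p)) j :
  col j (A *m B) = A *m col j B.
Proof. by rewrite !colE mulmxA. Qed.

Lemma mulmx_col_invmx n (g : 'M[R]_n) j : g \in unitmx ->
  g *m col j (invmx g) = col j 1%:M.
Proof. by move=> gu; rewrite -col_mulmx mulmxV. Qed.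

Lemma row_unitmx_neq0 n (X : 'M[R]_n) i : X \in unitmx -> row i X != 0.
Proof.
move=> Xu; apply/eqP => /(congr1 (mulmx^~ (invmx X))).
rewrite -row_mul mulmxV // mul0mx row1 => /matrixP/(_ 0 i).
by rewrite !mxE !eqxx => /eqP; rewrite oner_eq0.
Qed.

Lemma col_unitmx_neq0 n (X : 'M[R]_n) j : X \in unitmx -> col j X != 0.
Proof.
by move=> Xu; rewrite -[X]trmxK -tr_row trmx_eq0 row_unitmx_neq0 // unitmx_tr.
Qed.

End UnitMatrices.

Section Stabilizers.
Variable k : fieldType.

Lemma stabilizesE m (p : 'M[k]_4) (X : 'M_(m, 4)) : p \in unitmx ->
  stabilizes p X = (X *m p^T <= X)%MS.
Proof.
move=> pu; apply/idP/idP => [/andP[] // | sub].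
by rewrite /stabilizes sub /= -(mxrank_leqif_sup sub).2 mxrankMfree // row_free_unit unitmx_tr.
Qed.

Lemma stabilizes_mul m (p q : 'M[k]_4) (X : 'M_(m, 4)) :
  stabilizes p X -> stabilizes q X -> stabilizes (p *m q) X.
Proof.
move=> /eqmxP sp /eqmxP sq; apply/eqmxP.
by rewrite trmx_mul mulmxA; apply: eqmx_trans (eqmxMr _ sq) sp.
Qed.

Lemma stabilizes_inv m (p : 'M[k]_4) (X : 'M_(m, 4)) : p \in unitmx ->
  stabilizes p X -> stabilizes (invmx p) X.
Proof.
move=> pu /eqmxP sp; apply/eqmxP.
have XpK : X *m p^T *m (invmx p)^T = X by rewrite -mulmxA -trmx_mul mulVmx // trmx1 mulmx1.
by apply: eqmx_trans (eqmxMr _ (eqmx_sym sp)) _; rewrite XpK.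
Qed.

Lemma stabilizes_evec (q : 'M[k]_4) i : col i q = col i 1%:M -> stabilizes q (evec k i).
Proof.
by rewrite /stabilizes /evec -rowE -tr_col => ->; rewrite col1 trmx_delta; apply/eqmxP.
Qed.

Lemma col_L0mx (j : 'I_4) : j != 0 -> j != 1 -> col j (L0mx k) = 0.
Proof.
move=> j0 j1; rewrite /L0mx (@col_col_mx _ 1 1) -(@col_mx0 _ 1 1).
by f_equal; apply/matrixP => i l; rewrite !mxE ?(negPf j0) ?(negPf j1) andbF.
Qed.

Lemma sub_L0mx (v : 'cV[k]_4) : (v^T <= L0mx k)%MS = (v 2 0 == 0) && (v 3 0 == 0).
Proof.
have -> : v 2 0 = v^T 0 2 by rewrite mxE.
have -> : v 3 0 = v^T 0 3 by rewrite mxE.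
set r := v^T; apply/idP/andP => [/submxP [D ->] | [/eqP r2 /eqP r3]].
  have DL0_0 (j : 'I_4) : j != 0 -> j != 1 -> (D *m L0mx k) 0 j = 0.
    move=> j0 j1; have -> : (D *m L0mx k) 0 j = col j (D *m L0mx k) 0 0 by rewrite [RHS]mxE.
    by rewrite col_mulmx col_L0mx // mulmx0 mxE.
  by rewrite !DL0_0.
rewrite [r]row_sum_delta sum_ord4 r2 r3 !scale0r !addr0 /L0mx.
by rewrite -(addsmxE (evec k 0) (evec k 1)) addmx_sub // scalemx_sub // ?addsmxSl ?addsmxSr.
Qed.

Lemma stabilizes_L0mx (p : 'M[k]_4) : p \in unitmx ->
  stabilizes p (L0mx k) = ((col 0 p)^T <= L0mx k)%MS && ((col 1 p)^T <= L0mx k)%MS.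
Proof.
move=> pu; rewrite stabilizesE // (@mul_col_mx _ 1 1) (@col_mx_sub _ 1 1).
by rewrite /evec -!rowE !tr_col.
Qed.

End Stabilizers.

Section Similitudes.
Variable k : fieldType.

Definition sform m n (A : 'M[k]_(4, m)) (B : 'M[k]_(4, n)) : 'M[k]_(m, n) :=
  A^T *m Jmx k *m B.

Lemma sform_col m n (A : 'M[k]_(4, m)) (B : 'M[k]_(4, n)) i j :
  sform A B i j = sform (col i A) (col j B) 0 0.
Proof. by rewrite /sform tr_col -row_mul -col_mulmx -row_mul !mxE. Qed.

Lemma sform_mulmx (g : 'M[k]_4) (l : k) m n (A : 'M_(4, m)) (B : 'M_(4, n)) :
  sform g g = l *: Jmx k -> sform (g *m A) (g *m B) = l *: sform A B.
Proof.
rewrite /sform => gJ; rewrite trmx_mul -!mulmxA (mulmxA g^T) (mulmxA _ g) gJ.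
by rewrite -scalemxAl -scalemxAr !mulmxA.
Qed.

Lemma sform_e0 (v : 'cV[k]_4) : sform (col 0 1%:M) v 0 0 = v 2 0.
Proof. by expand_entries; ring. Qed.

Lemma sform_e1 (v : 'cV[k]_4) : sform (col 1 1%:M) v 0 0 = v 3 0.
Proof. by expand_entries; ring. Qed.

Lemma Jmx_mulmx_Jmx : Jmx k *m Jmx k = - 1%:M.
Proof. by mx4_entries; ring. Qed.

Lemma sform_unitmx (g : 'M[k]_4) (l : k) : l != 0 -> sform g g = l *: Jmx k ->
  g \in unitmx.
Proof.
move=> l0 gJ; suff /mulmx1_unit[] : - l^-1 *: (Jmx k *m g^T *m Jmx k) *m g = 1%:M by [].
rewrite -scalemxAl -!mulmxA (mulmxA g^T) -/(sform g g) gJ -scalemxAr Jmx_mulmx_Jmx.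
by rewrite scalerA mulNr mulVf // scaleN1r opprK.
Qed.

Lemma sform_GSp4 (g : 'M[k]_4) (l : k) : l != 0 -> sform g g = l *: Jmx k -> inGSp4 g.
Proof. by move=> l0 gJ; split; [exact: sform_unitmx gJ | exists l]. Qed.

Lemma GSp4_sform (g : 'M[k]_4) : inGSp4 g -> exists2 l, l != 0 & sform g g = l *: Jmx k.
Proof. by case=> _ [l [l0 gJ]]; exists l. Qed.

Lemma GSp4_mul (g h : 'M[k]_4) : inGSp4 g -> inGSp4 h -> inGSp4 (g *m h).
Proof.
case/GSp4_sform=> l l0 gJ /GSp4_sform[m m0 hJ].
by apply: (sform_GSp4 (mulf_neq0 l0 m0)); rewrite (sform_mulmx _ _ gJ) hJ scalerA.
Qed.

Lemma GSp4_inv (g : 'M[k]_4) : inGSp4 g -> inGSp4 (invmx g).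
Proof.
case/GSp4_sform=> l l0 gJ; apply: (sform_GSp4 (invr_neq0 l0)).
have := sform_mulmx (invmx g) (invmx g) gJ; rewrite mulmxV ?(sform_unitmx l0 gJ) //.
move/(congr1 (fun M => l^-1 *: M)).
by rewrite scalerA mulVf // scale1r /sform trmx1 mul1mx mulmx1 => <-.
Qed.

Lemma s2_GSp4 : inGSp4 (s2 k).
Proof.
apply: (sform_GSp4 (oner_neq0 k)).
by rewrite scale1r; mx4_entries; ring.
Qed.

Lemma col0_mulmx_s2 (M : 'M[k]_4) : col 0 (M *m s2 k) = col 0 M.
Proof. by apply/matrixP => i j; expand_entries; ring. Qed.

Lemma col3_mulmx_s2 (M : 'M[k]_4) : col 3 (M *m s2 k) = col 1 M.
Proof. by apply/matrixP => i j; expand_entries; ring. Qed.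

End Similitudes.

Section EmbeddedH.
Variables (k : fieldType) (alpha : k).
Hypothesis alpha_neq0 : alpha != 0.

Definition Kadd (x y : k * k) : k * k := (x.1 + y.1, x.2 + y.2).
Definition Kopp (x : k * k) : k * k := (- x.1, - x.2).
Definition Kscale (e : k) (x : k * k) : k * k := (e * x.1, e * x.2).
Definition Hdet (a b c d : k * k) : k * k := Ksub (Kmul alpha a d) (Kmul alpha b c).

Definition Jmx_alpha : 'M[k]_4 :=
  \matrix_(i < 4, j < 4)
   nth 0 (nth [::]
     [:: [:: 0; 0; 0; 1]; [:: 0; 0; alpha; 0]; [:: 0; - alpha; 0; 0]; [:: -1; 0; 0; 0]] i) j.

Lemma inH_embH a b c d : (Hdet a b c d).2 = 0 -> (Hdet a b c d).1 != 0 ->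
  inH alpha (embH alpha a b c d).
Proof. by move=> d2 d1; exists a, b, c, d. Qed.

Lemma inHP h : inH alpha h ->
  exists a b c d,
    [/\ (Hdet a b c d).2 = 0, (Hdet a b c d).1 != 0 & h = embH alpha a b c d].
Proof. by case=> a [b [c [d [d2 [d1 ->]]]]]; exists a, b, c, d. Qed.

Lemma embH_mul a b c d a' b' c' d' :
  embH alpha a b c d *m embH alpha a' b' c' d' =
  embH alpha (Kadd (Kmul alpha a a') (Kmul alpha b c')) (Kadd (Kmul alpha a b') (Kmul alpha b d'))
             (Kadd (Kmul alpha c a') (Kmul alpha d c')) (Kadd (Kmul alpha c b') (Kmul alpha d d')).
Proof. by mx4_entries; field. Qed.

Lemma Hdet_mul a b c d a' b' c' d' :
  Hdet (Kadd (Kmul alpha a a') (Kmul alpha b c')) (Kadd (Kmul alpha a b') (Kmul alpha b d'))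
       (Kadd (Kmul alpha c a') (Kmul alpha d c')) (Kadd (Kmul alpha c b') (Kmul alpha d d')) =
  Kmul alpha (Hdet a b c d) (Hdet a' b' c' d').
Proof. by rewrite /Hdet /Ksub /Kmul /Kadd /=; congr pair; ring. Qed.

Lemma embH_mul_adj a b c d :
  embH alpha a b c d *m embH alpha d (Kopp b) (Kopp c) a =
  embH alpha (Hdet a b c d) (0, 0) (0, 0) (Hdet a b c d).
Proof. by rewrite embH_mul /Hdet /Kadd /Ksub /Kmul /Kopp /=; congr embH; congr pair; ring. Qed.

Lemma embH_scalar_mx (e : k) : embH alpha (e, 0) (0, 0) (0, 0) (e, 0) = e%:M.
Proof. by mx4_entries; rewrite ?mul0r ?mulr0 ?mulr1n ?mulr0n. Qed.

Lemma scale_embH e a b c d :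
  e *: embH alpha a b c d = embH alpha (Kscale e a) (Kscale e b) (Kscale e c) (Kscale e d).
Proof. by mx4_entries; field. Qed.

Lemma Hdet_scale_adj e a b c d :
  Hdet (Kscale e d) (Kscale e (Kopp b)) (Kscale e (Kopp c)) (Kscale e a) =
  Kscale (e ^+ 2) (Hdet a b c d).
Proof. by rewrite /Hdet /Ksub /Kmul /Kscale /Kopp /=; congr pair; ring. Qed.

Lemma embH_sform a b c d :
  sform (embH alpha a b c d) (embH alpha a b c d) =
  (Hdet a b c d).1 *: Jmx k + (Hdet a b c d).2 *: Jmx_alpha.
Proof. by mx4_entries; field. Qed.

Lemma inH_GSp4 h : inH alpha h -> inGSp4 h.
Proof.
case/inHP=> a [b [c [d [d2 d1 ->]]]]; apply: (sform_GSp4 d1).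
by rewrite embH_sform d2 scale0r addr0.
Qed.

Lemma inH_mul h h' : inH alpha h -> inH alpha h' -> inH alpha (h *m h').
Proof.
case/inHP=> a [b [c [d [d2 d1 ->]]]] /inHP[a' [b' [c' [d' [d2' d1' ->]]]]].
rewrite embH_mul; apply: inH_embH; rewrite Hdet_mul /Kmul d2 d2' !mulr0 ?mul0r !addr0 //.
exact: (mulf_neq0 d1 d1').
Qed.

Lemma inH_inv h : inH alpha h -> inH alpha (invmx h).
Proof.
case/inHP=> a [b [c [d [d2 d1 ->]]]]; set e := (Hdet a b c d).1^-1.
have hV : embH alpha a b c d *m (e *: embH alpha d (Kopp b) (Kopp c) a) = 1%:M.
  rewrite -scalemxAr embH_mul_adj [Hdet a b c d]surjective_pairing d2 embH_scalar_mx.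
  by rewrite scale_scalar_mx mulVf.
have [hu _] := mulmx1_unit hV.
rewrite -[invmx _]mulmx1 -hV mulKmx // scale_embH; apply: inH_embH.
  by rewrite Hdet_scale_adj /Kscale d2 mulr0.
by rewrite Hdet_scale_adj /Kscale mulf_neq0 // expf_neq0 // invr_neq0.
Qed.

(* The last entry of the first column of embH is alpha * c.2. *)
Lemma embH_col0 (x : 'cV[k]_4) b d :
  col 0 (embH alpha (x 0 0, x 1 0) b (x 2 0, x 3 0 / alpha) d) = x.
Proof. by apply/colP; apply: ord4_ind; rewrite !mxE //= divfK. Qed.

Lemma embH_col3 (y : 'cV[k]_4) a c :
  col 3 (embH alpha a (alpha * y 1 0, y 0 0) c (y 3 0, y 2 0)) = y.
Proof. by apply/colP; apply: ord4_ind; rewrite !mxE //= [alpha * _]mulrC mulfK. Qed.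

(* The second column is sqrt(alpha) times the first one in K^2. *)
Lemma embH_col1 a b c d a' b' c' d' :
  col 0 (embH alpha a b c d) = col 0 (embH alpha a' b' c' d') ->
  col 1 (embH alpha a b c d) = col 1 (embH alpha a' b' c' d').
Proof.
move/colP => e; move: (e 0) (e 1) (e 2) (e 3); rewrite !mxE /= => e0 e1 e2 e3.
by apply/colP; apply: ord4_ind; rewrite !mxE /= ?e0 ?e1 ?e2 ?e3.
Qed.

Lemma inH_col03_L0 h : inH alpha h ->
  ((col 0 h)^T <= L0mx k)%MS -> ((col 3 h)^T <= L0mx k)%MS -> False.
Proof.
move=> Hh; have [hu _] := inH_GSp4 Hh; case/inHP: Hh hu => a [b [c [d [_ _ ->]]]] hu.
rewrite !sub_L0mx !mxE /= => /andP[/eqP c1 /eqP c2] /andP[/eqP d2 /eqP d1].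
move/negP: (row_unitmx_neq0 2 hu); apply.
by apply/eqP/rowP; apply: ord4_ind; rewrite !mxE /= ?c1 ?c2 ?d1 ?d2.
Qed.

End EmbeddedH.

Section Decompositions.
Variables (k : fieldType) (alpha : k).
Hypotheses (alpha_neq0 : alpha != 0) (alpha_nonsquare : ~ exists x : k, x ^+ 2 = alpha).

Lemma Knorm_neq0 (x : k * k) : x != (0, 0) -> x.1 ^+ 2 - alpha * x.2 ^+ 2 != 0.
Proof.
case: x => x1 x2 /= x_neq0; apply/eqP => N0; apply: alpha_nonsquare.
have e : x1 ^+ 2 = alpha * x2 ^+ 2 by apply/eqP; rewrite -subr_eq0 N0.
have x2_neq0 : x2 != 0.
  apply: contra_neq x_neq0 => x2_0; move: e; rewrite x2_0 expr0n mulr0 => /eqP.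
  by rewrite expf_eq0 /= => /eqP ->.
by exists (x1 / x2); rewrite expr_div_n e mulfK // expf_neq0.
Qed.

Lemma inH_completion a c : (a != (0, 0)) || (c != (0, 0)) ->
  exists b d, inH alpha (embH alpha a b c d).
Proof.
have [a0 /= c0 | a0 _] := eqVneq a (0, 0).
  exists (- c.1, c.2), (0, 0); apply: inH_embH; rewrite /Hdet /Ksub /Kmul /=; first by ring.
  have -> : a.1 * 0 + alpha * a.2 * 0 - (- c.1 * c.1 + alpha * c.2 * c.2) =
            c.1 ^+ 2 - alpha * c.2 ^+ 2 by ring.
  exact: Knorm_neq0.
exists (0, 0), (a.1, - a.2); apply: inH_embH; rewrite /Hdet /Ksub /Kmul /=; first by ring.
have -> : a.1 * a.1 + alpha * a.2 * - a.2 - (0 * c.1 + alpha * 0 * c.2) =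
          a.1 ^+ 2 - alpha * a.2 ^+ 2 by ring.
exact: Knorm_neq0.
Qed.

Lemma exists_inH_col0 (x : 'cV[k]_4) : x != 0 -> exists h, inH alpha h /\ col 0 h = x.
Proof.
move=> x_neq0; have [|b [d Hh]] := @inH_completion (x 0 0, x 1 0) (x 2 0, x 3 0 / alpha).
  apply: contraNT x_neq0 => /norP[/negPn/eqP a0 /negPn/eqP c0].
  rewrite -(embH_col0 alpha_neq0 x 0 0) a0 c0.
  by apply/eqP/colP; apply: ord4_ind; rewrite !mxE /= ?mul0r.
by exists (embH alpha (x 0 0, x 1 0) b (x 2 0, x 3 0 / alpha) d); rewrite embH_col0.
Qed.

Lemma GSp4_QH g : inGSp4 g -> exists q h, inQ q /\ inH alpha h /\ g = q *m h.
Proof.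
move=> Gg; have Gh := inH_GSp4 alpha_neq0.
have [h [Hh h0]] := exists_inH_col0 (col_unitmx_neq0 0 (GSp4_inv Gg).1).
exists (g *m h), (invmx h); split; [split | split].
- exact: GSp4_mul Gg (Gh _ Hh).
- by apply: stabilizes_evec; rewrite col_mulmx h0 mulmx_col_invmx // Gg.1.
- exact: (inH_inv alpha_neq0 Hh).
- by rewrite mulmxK // (Gh _ Hh).1.
Qed.

Lemma PH_of_isotropic g a b c d : inGSp4 g ->
  sform (embH alpha a b c d) (embH alpha a b c d) = 0 ->
  col 0 (embH alpha a b c d) = col 0 (invmx g) ->
  col 3 (embH alpha a b c d) = col 1 (invmx g) ->
  exists p h, inP p /\ inH alpha h /\ g = p *m h.
Proof.
move=> Gg hJ h0 h3; have [l _ gJ] := GSp4_sform Gg; have Gh := inH_GSp4 alpha_neq0.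
have [h' [Hh' h'0]] := exists_inH_col0 (col_unitmx_neq0 0 (GSp4_inv Gg).1).
have h'1 : col 1 h' = col 1 (embH alpha a b c d).
  case/inHP: Hh' h'0 => a' [b' [c' [d' [_ _ ->]]]] h'0.
  by apply: embH_col1; rewrite h'0 h0.
have Gp := GSp4_mul Gg (Gh _ Hh'); have [lp _ pJ] := GSp4_sform Gp.
have p0 : col 0 (g *m h') = col 0 1%:M by rewrite col_mulmx h'0 mulmx_col_invmx // Gg.1.
exists (g *m h'), (invmx h'); split; [split | split] => //.
- have p1_2 : col 1 (g *m h') 2 0 = 0.
    by rewrite -sform_e0 -p0 -sform_col pJ !mxE /= mulr0.
  have p1_3 : col 1 (g *m h') 3 0 = 0.
    rewrite -sform_e1 -(mulmx_col_invmx 1 Gg.1) col_mulmx (sform_mulmx _ _ gJ).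
    by rewrite [(l *: _ : 'M_1) 0 0]mxE h'1 -h3 -sform_col hJ mxE mulr0.
  by rewrite stabilizes_L0mx ?Gp.1 // p0 !sub_L0mx p1_2 p1_3 !mxE /= !eqxx.
- exact: (inH_inv alpha_neq0 Hh').
- by rewrite mulmxK // (Gh _ Hh').1.
Qed.

Lemma Ps2H_of_cols g h : inGSp4 g -> inH alpha h ->
  col 0 h = col 0 (invmx g) -> col 3 h = col 1 (invmx g) ->
  exists p h', inP p /\ inH alpha h' /\ g = p *m s2 k *m h'.
Proof.
move=> Gg Hh h0 h3; have Gh := inH_GSp4 alpha_neq0 Hh.
pose p := g *m h *m invmx (s2 k).
have ps2 : p *m s2 k = g *m h by rewrite mulmxKV // (s2_GSp4 k).1.
have Gp : inGSp4 p := GSp4_mul (GSp4_mul Gg Gh) (GSp4_inv (s2_GSp4 k)).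
exists p, (invmx h); split; [split | split] => //.
- rewrite stabilizes_L0mx ?Gp.1 // -col0_mulmx_s2 -col3_mulmx_s2 ps2 !col_mulmx h0 h3.
  by rewrite !mulmx_col_invmx ?Gg.1 // !sub_L0mx !mxE /= !eqxx.
- exact: (inH_inv alpha_neq0 Hh).
- by rewrite ps2 mulmxK // Gh.1.
Qed.

Lemma GSp4_PH_or_Ps2H g : inGSp4 g ->
  (exists p h, inP p /\ inH alpha h /\ g = p *m h) \/
  (exists p h, inP p /\ inH alpha h /\ g = p *m s2 k *m h).
Proof.
move=> Gg; set x := col 0 (invmx g); set y := col 1 (invmx g).
pose a := (x 0 0, x 1 0); pose b := (alpha * y 1 0, y 0 0).
pose c := (x 2 0, x 3 0 / alpha); pose d := (y 3 0, y 2 0).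
have h0 : col 0 (embH alpha a b c d) = x := embH_col0 alpha_neq0 x b d.
have h3 : col 3 (embH alpha a b c d) = y := embH_col3 alpha_neq0 y a c.
(* The sqrt(alpha)-part of the K-determinant is the pairing of x and y. *)
have det2 : (Hdet alpha a b c d).2 = 0.
  have [m _ XJ] := GSp4_sform (GSp4_inv Gg).
  have := sform_col (embH alpha a b c d) (embH alpha a b c d) 0 3.
  by rewrite h0 h3 -sform_col XJ embH_sform // !mxE /= !mulr0 mulr1 !add0r.
have [det1 | det1] := eqVneq (Hdet alpha a b c d).1 0.
  left; apply: PH_of_isotropic Gg _ h0 h3.
  by rewrite embH_sform // det1 det2 !scale0r addr0.
by right; apply: Ps2H_of_cols Gg (inH_embH det2 det1) h0 h3.
Qed.

Lemma PH_Ps2H_disjoint p1 h1 p2 h2 :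
  inP p1 -> inH alpha h1 -> inP p2 -> inH alpha h2 -> p1 *m h1 <> p2 *m s2 k *m h2.
Proof.
move=> [[p1u _] sp1] Hh1 [[p2u _] sp2] Hh2 E.
pose p := invmx p1 *m p2.
have pu : p \in unitmx by rewrite unitmx_mul unitmx_inv p1u.
have hp : h1 *m invmx h2 = p *m s2 k.
  by rewrite -[h1](mulKmx p1u) E !mulmxA mulmxK // (inH_GSp4 alpha_neq0 Hh2).1.
move: (stabilizes_mul (stabilizes_inv p1u sp1) sp2).
rewrite stabilizes_L0mx // => /andP[pL0 pL1].
apply: (inH_col03_L0 alpha_neq0 (inH_mul alpha_neq0 Hh1 (inH_inv alpha_neq0 Hh2))).
  by rewrite hp col0_mulmx_s2.
by rewrite hp col3_mulmx_s2.
Qed.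

End Decompositions.

Theorem lemma2p3 (k : fieldType) (alpha : k) :
  is_nonarch_local_field k ->
  (2%:R : k) != 0 ->
  alpha != 0 ->
  ~ (exists x : k, x ^+ 2 = alpha) ->
  (* G = Q H *)
  (forall g : 'M[k]_4,
     inGSp4 g <-> exists q h, inQ q /\ inH alpha h /\ g = q *m h) /\
  (* G = P H  u  P s2 H *)
  (forall g : 'M[k]_4,
     inGSp4 g <->
       ((exists p h, inP p /\ inH alpha h /\ g = p *m h) \/
        (exists p h, inP p /\ inH alpha h /\ g = p *m s2 k *m h))) /\
  (* ... and the union is disjoint *)
  ~ (exists p1 h1 p2 h2,
       inP p1 /\ inH alpha h1 /\ inP p2 /\ inH alpha h2 /\
       p1 *m h1 = p2 *m s2 k *m h2).
Proof.
move=> _ _ alpha_neq0 alpha_nonsquare; have Gh := inH_GSp4 alpha_neq0.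
split; [|split] => [g | g |].
- split; first exact: GSp4_QH.
  by case=> q [h [[Gq _] [Hh ->]]]; apply: GSp4_mul Gq (Gh _ Hh).
- split; first exact: GSp4_PH_or_Ps2H.
  case=> [[p [h [[Gp _] [Hh ->]]]] | [p [h [[Gp _] [Hh ->]]]]].
    exact: GSp4_mul Gp (Gh _ Hh).
  exact: GSp4_mul (GSp4_mul Gp (s2_GSp4 k)) (Gh _ Hh).
- case=> p1 [h1 [p2 [h2 [P1 [H1 [P2 [H2]]]]]]].
  exact: (PH_Ps2H_disjoint alpha_neq0 P1 H1 P2 H2).
Qed.
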